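(* Let $\Gamma$ be a lattice satisfying the standing assumptions below, and let $\mathcal{F}=\{f\in C_2(\Gamma): |\iota(f)|=1\}$. Let $f,f'\in\mathcal{F}$ and let $\rho=(f_1=f,f_2,\dots,f_m=f')$ be a face path from $f$ to $f'$ with $m\ge 2$. Then the operator $W^Z_{f,f'}(\rho)=\prod_{i=1}^m Z_{f_i}$ commutes with every element of the stabilizer group of the 3D toric code on $\Gamma$, i.e. it is either a stabilizer or a logical operator.
   Context: $\Gamma$ is a finite, connected three-dimensional cell complex (lattice) with vertices $C_0(\Gamma)$, edges $C_1(\Gamma)$ (partial edges, incident on only one vertex, are allowed at the boundary), faces $C_2(\Gamma)$ and volumes $C_3(\Gamma)$. For a face $f$, $\partial(f)$ is its set of boundary edges; for a volume $\nu$, $\partial(\nu)$ is its set of boundary faces; for an edge $e$, $\iota(e)$ is the set of faces $f$ with $e\in\partial(f)$; for a face $f$, $\iota(f)$ is the set of volumes $\nu$ with $f\in\partial(\nu)$. Every face lies in the boundary of at most two volumes. Standing assumptions: (L1) $\Gamma$ has no boundaries in its interior; (L2) the boundary of every face of $\Gamma$ and of every face of the dual complex $\Gamma^*$ is either a closed path or an open path beginning and ending with partial edges; the dual complex is connected. The 3D toric code on $\Gamma$ places one qubit on each face; its stabilizer group is generated by $B_e=\prod_{f\in\iota(e)}Z_f$ for $e\in C_1(\Gamma)$ and $A_\nu=\prod_{f\in\partial(\nu)}X_f$ for $\nu\in C_3(\Gamma)$. A logical operator is a Pauli operator commuting with all stabilizers but not itself in the stabilizer group (up to phase). A face path is a sequence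 of faces $\rho=(f_1,\dots,f_m)$ together with a sequence of pairwise distinct volumes $\Lambda(\rho)=(\nu_1,\dots,\nu_{m-1})$ such that $f_i,f_{i+1}\in\partial(\nu_i)$ for all $i$; it is a face path from $f_1$ to $f_m$. *)

From mathcomp Require Import all_boot.
Set Implicit Arguments.
Unset Strict Implicit.
Unset Printing Implicit Defensive.

(* A finite 3D cell complex: vertices, edges (each incident on one or two
   vertices; one vertex = partial edge), faces with boundary edges, volumes
   with boundary faces; every face lies in the boundary of at most two
   volumes. *)
Record lattice := Lattice {
  Vx : finType;
  Ed : finType;
  Fc : finType;
  Vol : finType;
  ends : Ed -> {set Vx};
  ends_card : forall e, 0 < #|ends e| <= 2;
  bdF : Fc -> {set Ed};
  bdV : Vol -> {set Fc};
  face_two : forall f, #|[set v | f \in bdV v]| <= 2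
}.

Section Toric.
Variable G : lattice.

Definition iotaE (e : Ed G) : {set Fc G} := [set f | e \in bdF f].
Definition iotaF (f : Fc G) : {set Vol G} := [set v | f \in bdV v].

Definition calF : {set Fc G} := [set f | #|iotaF f| == 1].

(* Pauli operators on the face qubits, modulo phase, in the standard
   binary symplectic representation: (X-part, Z-part). *)
Definition pauli := ({ffun Fc G -> bool} * {ffun Fc G -> bool})%type.

Definition pI : pauli := ([ffun => false], [ffun => false]).
Definition pmul (P Q : pauli) : pauli :=
  ([ffun f => xorb (P.1 f) (Q.1 f)], [ffun f => xorb (P.2 f) (Q.2 f)]).
Definition Zon (S : {set Fc G}) : pauli := ([ffun => false], [ffun f => f \in S]).
Definition Xon (S : {set Fc G}) : pauli := ([ffun f => f \in S], [ffun => false]).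
Definition Zf (f : Fc G) : pauli := Zon [set f].

(* P and Q commute iff the symplectic form vanishes mod 2 *)
Definition pcommute (P Q : pauli) : Prop :=
  ~~ odd (\sum_(f : Fc G) ((P.1 f && Q.2 f) + (P.2 f && Q.1 f))).

Definition Bop (e : Ed G) : pauli := Zon (iotaE e).
Definition Aop (v : Vol G) : pauli := Xon (bdV v).

Inductive in_stab : pauli -> Prop :=
| stab_id : in_stab pI
| stab_B e : in_stab (Bop e)
| stab_A v : in_stab (Aop v)
| stab_mul P Q : in_stab P -> in_stab Q -> in_stab (pmul P Q).

Definition face_path (fs : seq (Fc G)) (vs : seq (Vol G)) : Prop :=
  [/\ size vs = (size fs).-1, uniq vs &
      forall i, i < size vs ->
        forall f0 v0, (nth f0 fs i \in bdV (nth v0 vs i)) /\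
                      (nth f0 fs i.+1 \in bdV (nth v0 vs i))].

Definition WZ (fs : seq (Fc G)) : pauli := foldr pmul pI (map Zf fs).

End Toric.

(** The operator is of Z type, so it commutes with every B_e; it commutes with
   A_v iff the path meets the boundary of v an even number of times.  Every
   interior face f_i of the path lies in the distinct volumes nu_(i-1) and nu_i,
   hence in no other since a face bounds at most two volumes; an end face lies
   in exactly one volume, which must be nu_1 (resp. nu_(m-1)).  So each
   occurrence of v in Lambda(rho) contributes exactly two faces of the path to
   the boundary of v. *)

From mathcomp Require Import all_boot.
Set Implicit Arguments.
Unset Strict Implicit.
Unset Printing Implicit Defensive.

Lemma count_sum_nth (T : Type) (a : pred T) (x0 : T) (s : seq T) :
  count a s = \sum_(0 <= i < size s) a (nth x0 s i).
Proof.
rewrite -sum1_count big_mkcond (big_nth x0).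
by apply: eq_bigr => i _; case: (a _).
Qed.

Section Symplectic.
Variable G : lattice.
Implicit Types (P Q R : pauli G) (S : {set Fc G}).

(* [pcommute P Q] is convertibly [~~ symp P Q]. *)
Definition symp P Q : bool :=
  odd (\sum_(f : Fc G) ((P.1 f && Q.2 f) + (P.2 f && Q.1 f))).

Lemma sympE P Q :
  symp P Q = \big[addb/false]_(f : Fc G) ((P.1 f && Q.2 f) (+) (P.2 f && Q.1 f)).
Proof.
rewrite /symp (big_morph odd oddD erefl).
by apply: eq_bigr => f _; rewrite oddD !oddb.
Qed.

Lemma sympC P Q : symp P Q = symp Q P.
Proof.
by rewrite !sympE; apply: eq_bigr => f _; rewrite addbC; congr addb; apply: andbC.
Qed.

Lemma symp1l P : symp (pI G) P = false.
Proof. by rewrite sympE big1 // => f _; rewrite !ffunE. Qed.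

Lemma symp1r P : symp P (pI G) = false.
Proof. by rewrite sympC symp1l. Qed.

Lemma sympMl P Q R : symp (pmul P Q) R = symp P R (+) symp Q R.
Proof.
rewrite !sympE -big_split; apply: eq_bigr => f _; rewrite !ffunE /=.
by case: (P.1 f); case: (P.2 f); case: (Q.1 f); case: (Q.2 f);
   case: (R.1 f); case: (R.2 f).
Qed.

Lemma sympMr P Q R : symp P (pmul Q R) = symp P Q (+) symp P R.
Proof. by rewrite sympC sympMl ![symp _ P]sympC. Qed.

Lemma symp_ZonZon S S' : symp (Zon S) (Zon S') = false.
Proof. by rewrite sympE big1 // => f _; rewrite !ffunE andbF. Qed.

Lemma symp_ZfXon x S : symp (Zf x) (Xon S) = (x \in S).
Proof.
rewrite sympE (bigD1 x) //= big1 ?addbF; first by rewrite !ffunE !inE eqxx.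
by move=> f /negbTE xf; rewrite !ffunE !inE xf.
Qed.

Lemma symp_WZ_Zon (s : seq (Fc G)) S : symp (WZ s) (Zon S) = false.
Proof. by elim: s => [|x s IHs] /=; rewrite ?symp1l // sympMl IHs symp_ZonZon. Qed.

Lemma symp_WZ_Xon (s : seq (Fc G)) S : symp (WZ s) (Xon S) = odd (count (mem S) s).
Proof.
by elim: s => [|x s IHs] /=; rewrite ?symp1l // sympMl IHs symp_ZfXon oddD oddb.
Qed.

Lemma symp_stab P Q :
  (forall e, symp P (Bop e) = false) -> (forall v, symp P (Aop v) = false) ->
  in_stab Q -> symp P Q = false.
Proof.
move=> PB PA; elim=> [|e|v|Q1 Q2 _ IH1 _ IH2]; rewrite ?symp1r //.
by rewrite sympMr IH1 IH2.
Qed.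

End Symplectic.

Section FacePath.
Variable G : lattice.

Lemma iotaF_calF (g : Fc G) u : g \in calF G -> g \in bdV u -> iotaF g = [set u].
Proof.
rewrite inE => /cards1P[w gw] gu.
have : u \in iotaF g by rewrite inE.
by rewrite gw inE => /eqP <-.
Qed.

Lemma iotaF_pair (g : Fc G) u u' :
  g \in bdV u -> g \in bdV u' -> u != u' -> iotaF g = [set u; u'].
Proof.
move=> gu gu' uu'; apply/esym/eqP; rewrite eqEcard cards2 uu' face_two andbT.
by apply/subsetP => w; rewrite !inE => /orP[] /eqP->.
Qed.

Variables (fs : seq (Fc G)) (vs : seq (Vol G)) (f0 : Fc G).
Hypotheses (fs_path : face_path fs vs) (vs_gt0 : 0 < size vs).
Hypotheses (first_calF : nth f0 fs 0 \in calF G)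
           (last_calF : nth f0 fs (size vs) \in calF G).

Lemma face_path_bdV i v0 v : i <= size vs ->
  (nth f0 fs i \in bdV v : nat) =
  ((0 < i) && (nth v0 vs i.-1 == v)) + ((i < size vs) && (nth v0 vs i == v)).
Proof.
have [_ vs_uniq adj] := fs_path.
have mem_iotaF g : (g \in bdV v) = (v \in iotaF g) by rewrite inE.
rewrite leq_eqVlt mem_iotaF => /predU1P[->|i_lt_n].
  have [_] := adj (size vs).-1 ltac:(by rewrite ltn_predL) f0 v0.
  rewrite prednK // => last_bd.
  by rewrite (iotaF_calF last_calF last_bd) vs_gt0 ltnn addn0 inE eq_sym.
have [->|i_gt0] := posnP i.
  by rewrite (iotaF_calF first_calF (adj 0 vs_gt0 f0 v0).1) vs_gt0 inE eq_sym.
have [_ prev_bd] := adj i.-1 (leq_ltn_trans (leq_pred i) i_lt_n) f0 v0.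
rewrite prednK // in prev_bd.
have neighbours_neq : nth v0 vs i.-1 != nth v0 vs i.
  by rewrite nth_uniq ?(leq_ltn_trans (leq_pred i)) // neq_ltn ltn_predL i_gt0.
rewrite (iotaF_pair prev_bd (adj i i_lt_n f0 v0).1 neighbours_neq) i_lt_n !inE.
move: neighbours_neq; rewrite /= !(eq_sym v).
by case: (nth _ _ i.-1 =P v) => [->|_]; case: (nth _ _ i =P v) => [->|_]; rewrite ?eqxx.
Qed.

Lemma count_bdV_face_path v : count (mem (bdV v)) fs = (count (pred1 v) vs).*2.
Proof.
have size_fs : size fs = (size vs).+1 by case: fs_path vs_gt0 => -> _ _; case: size.
rewrite (count_sum_nth _ f0) size_fs.
under eq_big_nat => i /andP[_ i_le] do rewrite (face_path_bdV v v i_le).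
rewrite big_split big_nat_recl // big_nat_recr //= ltnn addn0 add0n -addnn.
congr (_ + _); rewrite (count_sum_nth _ v).
  by apply: eq_big_nat.
by apply: eq_big_nat => i /andP[_ ->].
Qed.

End FacePath.

Theorem lemma1 (G : lattice) (f f' : Fc G) (fs : seq (Fc G)) (vs : seq (Vol G)) :
  f \in calF G -> f' \in calF G ->
  2 <= size fs ->
  head f fs = f -> last f fs = f' ->
  face_path fs vs ->
  forall P : pauli G, in_stab P -> pcommute (WZ fs) P.
Proof.
move=> f_calF f'_calF size_fs head_fs last_fs fs_path P P_stab.
have size_vs : size vs = (size fs).-1 by case: fs_path.
have vs_gt0 : 0 < size vs by rewrite size_vs -subn1 subn_gt0.
have first_calF : nth f fs 0 \in calF G by rewrite nth0 head_fs.
have last_calF : nth f fs (size vs) \in calF G by rewrite size_vs nth_last last_fs.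
apply/negbT/(symp_stab _ _ P_stab) => [e | v]; first exact: symp_WZ_Zon.
rewrite symp_WZ_Xon.
by rewrite (count_bdV_face_path fs_path vs_gt0 first_calF last_calF) odd_double.
Qed.
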